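(* Let $q=2^r$ with $r$ even, and $n\ge 1$. Let: - $g\in\mathbb{F}_q[x_1,\dots,x_n]$ be a polynomial of total degree $n(q-1)/3$; - $f\in\mathbb{F}_q[y]$ be a permutation polynomial of degree $q-2$; - $a\in\mathbb{F}_q$ be an element that is not a cube in $\mathbb{F}_q$. Then $$h(x_1,\dots,x_n,y)=\bigl(g(x_1,\dots,x_n)^3-a\bigr)f(y)$$ is a permutation polynomial in $\mathbb{F}_q[x_1,\dots,x_n,y]$.
   Context: $\mathbb{F}_q$ is the finite field with $q$ elements. A polynomial in $m$ variables over $\mathbb{F}_q$ is a permutation polynomial (PP) if, for every $c\in\mathbb{F}_q$, the equation $h=c$ has exactly $q^{m-1}$ solutions in $\mathbb{F}_q^m$. A univariate PP is a polynomial inducing a bijection of $\mathbb{F}_q$. *)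

From HB Require Import structures.
From mathcomp Require Import all_boot all_order all_algebra.
From mathcomp Require Import mpoly.
Set Implicit Arguments. Unset Strict Implicit. Unset Printing Implicit Defensive.
Import GRing.Theory.
Local Open Scope ring_scope.

Definition is_mPP (F : finFieldType) (m : nat) (h : {mpoly F[m]}) : Prop :=
  forall c : F, #|[set x : {ffun 'I_m -> F} | h.@[x] == c]| = (#|F| ^ m.-1)%N.

Definition is_PP (F : finFieldType) (f : {poly F}) : Prop :=
  bijective (fun y : F => f.[y]).

(* g(x_1..x_n), viewed in F[x_1,...,x_n,y] (variables 0..n-1 are x, n is y). *)
Definition liftx (F : finFieldType) (n : nat) (g : {mpoly F[n]}) : {mpoly F[n.+1]} :=
  g \mPo [tuple 'X_(widen_ord (leqnSn n) i) | i < n].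

Definition lifty (F : finFieldType) (n : nat) (f : {poly F}) : {mpoly F[n.+1]} :=
  (map_poly (@mpolyC n.+1 F) f).['X_(@ord_max n)].

Definition hpoly (F : finFieldType) (n : nat) (g : {mpoly F[n]}) (f : {poly F}) (a : F)
  : {mpoly F[n.+1]} :=
  (liftx g ^+ 3 - a%:MP) * lifty n f.

From HB Require Import structures.
From mathcomp Require Import all_boot all_order all_algebra.
From mathcomp Require Import mpoly.
Import GRing.Theory.
Set Implicit Arguments. Unset Strict Implicit. Unset Printing Implicit Defensive.
Local Open Scope ring_scope.

(* Write a point of F^(n+1) as a pair (u, y) with u in F^n and y
   in F.  Evaluating h at (u, y) gives (g(u)^3 - a) * f(y).  Since a is not a
   cube, the factor g(u)^3 - a never vanishes, so for a fixed u the equation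
   h(u, y) = c reads f(y) = c / (g(u)^3 - a), which has exactly one solution y
   because f permutes F. *)

Section LastCoordinate.
Variables (T : Type) (m : nat).

Definition finit (z : {ffun 'I_m.+1 -> T}) : {ffun 'I_m -> T} :=
  [ffun j => z (lift ord_max j)].

Definition fext (u : {ffun 'I_m -> T}) (y : T) : {ffun 'I_m.+1 -> T} :=
  [ffun i => if unlift ord_max i is Some j then u j else y].

Lemma finit_fext u y : finit (fext u y) = u.
Proof. by apply/ffunP => j; rewrite !ffunE liftK. Qed.

Lemma fext_last u y : fext u y ord_max = y.
Proof. by rewrite ffunE unlift_none. Qed.

Lemma fext_finit z : fext (finit z) (z ord_max) = z.
Proof. by apply/ffunP => i; rewrite ffunE; case: unliftP => [j ->|->]; rewrite ?ffunE. Qed.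

End LastCoordinate.
Arguments finit {T m}.

Lemma card_graph (T : finType) (m : nat) (P : {ffun 'I_m -> T} -> T -> bool)
    (s : {ffun 'I_m -> T} -> T) :
  (forall u y, P u y = (y == s u)) ->
  #|[set z : {ffun 'I_m.+1 -> T} | P (finit z) (z ord_max)]| = (#|T| ^ m)%N.
Proof.
move=> Pgraph.
have -> : [set z | P (finit z) (z ord_max)] = [set fext u (s u) | u in setT].
  apply/setP => z; rewrite inE Pgraph; apply/eqP/imsetP => [zs | [u _ ->]].
    by exists (finit z); rewrite // -zs fext_finit.
  by rewrite fext_last finit_fext.
have fext_inj : injective (fun u => fext u (s u)).
  by move=> u v /(congr1 finit); rewrite !finit_fext.
by rewrite card_imset // cardsT card_ffun card_ord.
Qed.

Lemma lifty_eval (F : finFieldType) n (f : {poly F}) (x : 'I_n.+1 -> F) :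
  (lifty n f).@[x] = f.[x ord_max].
Proof.
rewrite /lifty -[X in _ = f.[X]](mevalXU x) -horner_map /= -map_poly_comp.
by congr (_.[_]); apply: map_poly_id => c _ /=; rewrite mevalC.
Qed.

Lemma liftx_eval (F : finFieldType) n (g : {mpoly F[n]}) (z : {ffun 'I_n.+1 -> F}) :
  (liftx g).@[z] = g.@[finit z].
Proof.
rewrite /liftx comp_mpoly_meval; apply: meval_eq => j.
rewrite tnth_map tnth_ord_tuple mevalXU ffunE; congr (z _).
by apply: val_inj; rewrite /= /bump leqNgt ltn_ord.
Qed.

Lemma hpoly_eval (F : finFieldType) n (g : {mpoly F[n]}) (f : {poly F}) (a : F)
    (z : {ffun 'I_n.+1 -> F}) :
  (hpoly g f a).@[z] = (g.@[finit z] ^+ 3 - a) * f.[z ord_max].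
Proof.
by rewrite /hpoly mevalM mevalB mevalC lifty_eval rmorphXn /= liftx_eval.
Qed.

Theorem mainTheorem7 (F : finFieldType) (r n : nat)
  (hq : #|F| = (2 ^ r)%N) (hr : ~~ odd r) (hn : (1 <= n)%N)
  (g : {mpoly F[n]}) (f : {poly F}) (a : F)
  (hg : msize g = ((n * (2 ^ r - 1)) %/ 3).+1)
  (hfPP : is_PP f) (hf : size f = (2 ^ r - 2).+1)
  (ha : forall b : F, b ^+ 3 != a) :
  is_mPP (hpoly g f a).
Proof.
move=> c; case: hfPP => finv fK Kf.
pose d u := g.@[u] ^+ 3 - a.
have d_neq0 u : d u != 0 by rewrite subr_eq0 ha.
have solution u y : (d u * f.[y] == c) = (y == finv (c / d u)).
  apply/eqP/eqP => [<- | ->]; first by rewrite [d u * _]mulrC mulfK ?fK.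
  by rewrite Kf mulrC divfK.
under eq_finset => z do rewrite hpoly_eval.
by rewrite (card_graph (P := fun u y => d u * f.[y] == c) solution).
Qed.
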